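(* Let $C$ be a linear completely regular $[n,k,2]_q$ code with covering radius $\rho=1$ and $k<n-1$, let $n_a$ be the number of codewords at distance one from any vector not in $C$, and let $X_1,\dots,X_{n/n_a}$ be a partition of $\{1,\dots,n\}$ into sets of size $n_a$ such that every weight-2 codeword of $C$ has support contained in one of the $X_j$. Let ${\bf x}=(x_1,\dots,x_n)\in C$ and let $X_j$ be one of these sets with $\mathrm{supp}({\bf x})\cap X_j\neq\emptyset$. Then there exists a codeword ${\bf x}'\in C$ which coincides with ${\bf x}$ in all positions outside $X_j$ and satisfies $|\mathrm{supp}({\bf x}')\cap X_j|\le 1$; moreover, in the case where such an ${\bf x}'$ has $|\mathrm{supp}({\bf x}')\cap X_j|=1$, for every position $i\in X_j$ there is such a codeword ${\bf x}'$ with $\mathrm{supp}({\bf x}')\cap X_j=\{i\}$.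
   Context: Hamming distance; $\mathrm{supp}({\bf v})$ is the set of nonzero coordinates of ${\bf v}$; covering radius $\rho=\max_{\bf v}\min_{{\bf x}\in C}d({\bf v},{\bf x})$. $C$ is completely regular if for every vector ${\bf x}$, with $t=d({\bf x},C)$, the number of codewords at distance $i$ from ${\bf x}$ depends only on $t$ and $i$. *)

From HB Require Import structures.
From mathcomp Require Import all_boot all_order all_algebra.
Set Implicit Arguments. Unset Strict Implicit. Unset Printing Implicit Defensive.
Import GRing.Theory.
Local Open Scope ring_scope.

Section Codes.
Variables (F : finFieldType) (n : nat).

Definition supp (v : 'rV[F]_n) : {set 'I_n} := [set i | v 0 i != 0].

Definition wt (v : 'rV[F]_n) : nat := #|supp v|.
Definition hdist (u v : 'rV[F]_n) : nat := wt (u - v).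

(* distance from a vector to a code (C contains 0, so the min is over a nonempty set;
   every distance is <= n, so n is a neutral starting value) *)
Definition dist_to (C : {vspace 'rV[F]_n}) (x : 'rV[F]_n) : nat :=
  \big[minn/n]_(c : 'rV[F]_n | c \in C) hdist x c.

Definition covering_radius (C : {vspace 'rV[F]_n}) : nat :=
  \max_(v : 'rV[F]_n) dist_to C v.

Definition min_dist_eq (C : {vspace 'rV[F]_n}) (d : nat) : Prop :=
  (exists2 c, c \in C & (c != 0) /\ wt c = d) /\
  (forall c, c \in C -> c != 0 -> (d <= wt c)%N).

Definition nb_at (C : {vspace 'rV[F]_n}) (x : 'rV[F]_n) (i : nat) : nat :=
  #|[set c : 'rV[F]_n | (c \in C) && (hdist x c == i)]|.

Definition completely_regular (C : {vspace 'rV[F]_n}) : Prop :=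
  forall x y : 'rV[F]_n, dist_to C x = dist_to C y ->
    forall i, nb_at C x i = nb_at C y i.

End Codes.

From HB Require Import structures.
From mathcomp Require Import all_boot all_order all_algebra.
Set Implicit Arguments. Unset Strict Implicit. Unset Printing Implicit Defensive.
Import GRing.Theory.
Local Open Scope ring_scope.

(* Let e_i be the unit vector at a position i of a block X. Since the
   minimum distance is 2, e_i is not a codeword, and every codeword at distance
   one from e_i differs from it in a single position; two distinct such
   codewords cannot differ in the same position.  A codeword that differs from
   e_i at j <> i has support {i, j}, hence lies in the block of i.  Counting the
   n_a = |X| codewords at distance one therefore shows that every j in X occurs:
   for all i <> j in X there is a weight-2 codeword supported on {i, j}.  These
   codewords act as pivots: subtracting multiples of them clears all but one
   coordinate of x inside X without touching the coordinates outside X, and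
   moves the remaining nonzero coordinate to any prescribed position of X. *)

Section Support.
Variables (F : finFieldType) (n : nat).
Implicit Types (u v : 'rV[F]_n) (i j l : 'I_n).

Lemma in_supp v l : (l \in supp v) = (v 0 l != 0).
Proof. by rewrite inE. Qed.

Lemma supp_sub u v : supp (u - v) \subset supp u :|: supp v.
Proof.
apply/subsetP => l; rewrite !inE !mxE; apply: contraR.
by rewrite negb_or !negbK => /andP[/eqP-> /eqP->]; rewrite subr0.
Qed.

Lemma supp_delta i : supp ('e_i : 'rV[F]_n) = [set i].
Proof.
by apply/setP => l; rewrite in_supp mxE in_set1 eqxx /=; case: (l == i); rewrite ?oner_eq0 ?eqxx.
Qed.

Lemma supp_dist1_delta v i j : supp (('e_i : 'rV[F]_n) - v) = [set j] -> j != i ->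
  v 0 i = 1 /\ supp v = [set i; j].
Proof.
move=> supp_dv ji.
have vE l : v 0 l = (l == i)%:R - ('e_i - v) 0 l.
  by rewrite !mxE eqxx /= opprD opprK addrA subrr add0r.
have dv_eq0 l : (('e_i - v) 0 l == 0) = (l != j).
  by rewrite -[l == j]in_set1 -supp_dv in_supp negbK.
have vi : v 0 i = 1.
  by rewrite vE eqxx; move: (dv_eq0 i); rewrite [i == j]eq_sym ji => /eqP->; rewrite subr0.
split=> //; apply/setP => l; rewrite in_supp in_set2.
have [->|li] := eqVneq l i; first by rewrite vi oner_eq0.
by rewrite vE (negbTE li) sub0r oppr_eq0 dv_eq0 negbK.
Qed.

Lemma supp_subset_eq0 v (A : {set 'I_n}) l : supp v \subset A -> l \notin A -> v 0 l = 0.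
Proof. by move=> sub_vA /(contra (subsetP sub_vA l)); rewrite in_supp negbK => /eqP. Qed.

End Support.

Section PivotCodewords.
Variables (F : finFieldType) (n : nat) (C : {vspace 'rV[F]_n}).
Hypothesis C_wt_ge2 : forall c, c \in C -> c != 0 -> (2 <= wt c)%N.

Lemma codeword_supp_le1 c : c \in C -> (#|supp c| <= 1)%N -> c = 0.
Proof.
move=> cC supp_le1; apply/eqP; apply: contraTT supp_le1 => c_neq0.
by rewrite -ltnNge; apply: C_wt_ge2.
Qed.

Lemma delta_notin_code i : ('e_i : 'rV[F]_n) \notin C.
Proof.
apply/negP => /codeword_supp_le1; rewrite supp_delta cards1 => /(_ isT)/matrixP/(_ 0 i).
by rewrite !mxE !eqxx /= => /eqP; rewrite oner_eq0.
Qed.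

Variables (P : {set {set 'I_n}}) (X : {set 'I_n}).
Hypothesis P_partition : partition P [set: 'I_n].
Hypothesis wt2_in_block :
  forall c, c \in C -> wt c = 2%N -> exists2 Y, Y \in P & supp c \subset Y.
Hypothesis X_block : X \in P.
Hypothesis nb_at_delta : forall i, i \in X -> nb_at C ('e_i : 'rV[F]_n) 1 = #|X|.

Lemma block_pair_codeword i j : i \in X -> j \in X -> i != j ->
  exists2 c, c \in C & [/\ c 0 i = 1, c 0 j != 0 & supp c \subset [set i; j]].
Proof.
move=> iX jX ij; set e : 'rV[F]_n := 'e_i.
set S := [set c | (c \in C) && (hdist e c == 1%N)].
set pos := fun c : 'rV[F]_n => odflt i [pick l in supp (e - c)].
have posP c : c \in S -> supp (e - c) = [set pos c].
  rewrite inE => /andP[_ /cards1P[l supp_ec]].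
  rewrite supp_ec /pos; case: pickP => [l'|/(_ l)]; rewrite supp_ec in_set1 ?eqxx //.
  by move=> /eqP->.
have SC c : c \in S -> c \in C by rewrite inE => /andP[].
have pos_inj : {in S &, injective pos}.
  move=> c c' cS c'S pos_cc'; apply/eqP; rewrite eq_sym -subr_eq0; apply/eqP.
  apply: codeword_supp_le1; first by rewrite memvB ?SC.
  have <- : (e - c) - (e - c') = c' - c by rewrite opprB addrC addrA subrK.
  apply: leq_trans (subset_leq_card (supp_sub _ _)) _.
  by rewrite (posP _ cS) (posP _ c'S) pos_cc' setUid cards1.
have pos_block c : c \in S -> pos c \in X.
  move=> cS; have [->//|posi] := eqVneq (pos c) i.
  have [_ supp_c] := supp_dist1_delta (posP c cS) posi.
  have [Y YP sub_cY] : exists2 Y, Y \in P & supp c \subset Y.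
    by apply: wt2_in_block; rewrite ?SC // /wt supp_c cards2 eq_sym posi.
  have iY : i \in Y by apply: (subsetP sub_cY); rewrite supp_c set21.
  have trivP : trivIset P by case/and3P: P_partition.
  rewrite -(def_pblock trivP X_block iX) (def_pblock trivP YP iY).
  by apply: (subsetP sub_cY); rewrite supp_c set22.
have pos_onto : pos @: S = X.
  apply/eqP; rewrite eqEcard; apply/andP; split.
    by apply/subsetP => l /imsetP[c cS ->]; apply: pos_block.
  by rewrite card_in_imset // -(nb_at_delta iX).
have /imsetP[c cS jE] : j \in pos @: S by rewrite pos_onto.
have pos_c_neq_i : pos c != i by rewrite -jE eq_sym.
have [ci supp_c] := supp_dist1_delta (posP c cS) pos_c_neq_i.
rewrite -jE in supp_c; exists c; rewrite ?SC //.
by split; rewrite // -?in_supp supp_c ?set22.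
Qed.

End PivotCodewords.

Section BlockReduction.
Variables (F : finFieldType) (n : nat) (C : {vspace 'rV[F]_n}) (X : {set 'I_n}).
Hypothesis block_pivot : forall i j, i \in X -> j \in X -> i != j ->
  exists2 c, c \in C & [/\ c 0 i = 1, c 0 j != 0 & supp c \subset [set i; j]].

Lemma pivot_sub_id (y c : 'rV[F]_n) i l : c 0 l = 0 -> (y - y 0 i *: c) 0 l = y 0 l.
Proof. by move=> cl; rewrite !mxE cl mulr0 subr0. Qed.

Lemma pivot_sub_eq0 (y c : 'rV[F]_n) i : c 0 i = 1 -> (y - y 0 i *: c) 0 i = 0.
Proof. by move=> ci; rewrite !mxE ci mulr1 subrr. Qed.

Lemma block_reduce y : y \in C -> exists2 y', y' \in C &
  (forall l, l \notin X -> y' 0 l = y 0 l) /\ (#|supp y' :&: X| <= 1)%N.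
Proof.
have [m] := ubnP #|supp y :&: X|; elim: m y => // m IHm y lt_m yC.
have [le1|/card_gt1P[i [j [iyX jyX ij]]]] := leqP #|supp y :&: X| 1; first by exists y.
move: (iyX) (jyX); rewrite !inE => /andP[_ iX] /andP[_ jX].
have [c cC [ci _ sub_c]] := block_pivot iX jX ij.
set z := y - y 0 i *: c.
have zy l : l \notin X -> z 0 l = y 0 l.
  move=> lX; apply/pivot_sub_id/(supp_subset_eq0 sub_c).
  by apply: contra lX; rewrite in_set2 => /orP[]/eqP->.
have supp_z : supp z :&: X \subset (supp y :&: X) :\ i.
  apply/subsetP => l; rewrite !inE -!in_supp => /andP[lz lX].
  rewrite lX andbT; have [li|li] := eqVneq l i.
    by move: lz; rewrite li in_supp pivot_sub_eq0 ?eqxx.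
  have [lj|lj] := eqVneq l j; first by move: jyX; rewrite lj inE => /andP[].
  by move: lz; rewrite !in_supp pivot_sub_id // (supp_subset_eq0 sub_c) // in_set2 negb_or li.
have [y' y'C [y'z le1]] : exists2 y', y' \in C &
    (forall l, l \notin X -> y' 0 l = z 0 l) /\ (#|supp y' :&: X| <= 1)%N.
  apply: IHm; last by rewrite memvB ?memvZ.
  apply: leq_ltn_trans (subset_leq_card supp_z) _.
  by move: lt_m; rewrite (cardsD1 i) iyX add1n ltnS.
by exists y' => //; split=> // l lX; rewrite y'z ?zy.
Qed.

Lemma block_move y i0 i : y \in C -> supp y :&: X = [set i0] -> i \in X ->
  exists2 y', y' \in C &
    (forall l, l \notin X -> y' 0 l = y 0 l) /\ supp y' :&: X = [set i].
Proof.
move=> yC supp_y iX.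
have [<-|i0i] := eqVneq i0 i; first by exists y.
have [i0y i0X] : i0 \in supp y /\ i0 \in X by apply/setIP; rewrite supp_y set11.
have y_eq0 l : l \in X -> l != i0 -> y 0 l = 0.
  move=> lX li0; apply/eqP; rewrite -[_ == 0]negbK -in_supp.
  by apply: contra li0 => ly; rewrite -in_set1 -supp_y inE ly.
have [c cC [ci0 ci sub_c]] := block_pivot i0X iX i0i.
exists (y - y 0 i0 *: c); first by rewrite memvB ?memvZ.
have c_out l : l \notin [set i0; i] -> c 0 l = 0 := supp_subset_eq0 sub_c.
split=> [l lX|].
  by apply/pivot_sub_id/c_out; apply: contra lX; rewrite in_set2 => /orP[]/eqP->.
apply/setP => l; rewrite !inE.
have [lX|lX] := boolP (l \in X); last first.
  by rewrite andbF; apply/esym/eqP => li; rewrite li iX in lX.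
rewrite andbT; have [->|li] := eqVneq l i.
  have ii0 : i != i0 by rewrite eq_sym.
  by rewrite !mxE (y_eq0 i iX ii0) sub0r oppr_eq0 mulf_neq0 // -in_supp.
have [->|li0] := eqVneq l i0; first by rewrite pivot_sub_eq0 ?eqxx.
by rewrite pivot_sub_id ?y_eq0 ?eqxx ?c_out // in_set2 negb_or li0.
Qed.

End BlockReduction.

Theorem lemma3p8 (F : finFieldType) (n k na : nat) (C : {vspace 'rV[F]_n})
  (P : {set {set 'I_n}})
  (Hdim : \dim C = k)
  (Hmd : min_dist_eq C 2)
  (Hcr : completely_regular C)
  (Hrho : covering_radius C = 1%N)
  (Hk : (k < n.-1)%N)
  (Hna : forall v : 'rV[F]_n, v \notin C -> nb_at C v 1 = na)
  (Hpart : partition P [set: 'I_n])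
  (Hsize : forall X, X \in P -> #|X| = na)
  (Hw2 : forall c, c \in C -> wt c = 2%N -> exists2 X, X \in P & supp c \subset X)
  (x : 'rV[F]_n) (Hx : x \in C) (X : {set 'I_n}) (HX : X \in P)
  (Hmeet : supp x :&: X != set0) :
  (exists2 x' : 'rV[F]_n, x' \in C &
     (forall i, i \notin X -> x' 0 i = x 0 i) /\ (#|supp x' :&: X| <= 1)%N) /\
  ((exists2 x' : 'rV[F]_n, x' \in C &
     (forall i, i \notin X -> x' 0 i = x 0 i) /\ #|supp x' :&: X| = 1%N) ->
   forall i, i \in X ->
     exists2 x' : 'rV[F]_n, x' \in C &
       (forall j, j \notin X -> x' 0 j = x 0 j) /\ supp x' :&: X = [set i]).
Proof.
have C_wt_ge2 : forall c, c \in C -> c != 0 -> (2 <= wt c)%N := Hmd.2.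
have nb_at_delta i : i \in X -> nb_at C ('e_i) 1 = #|X|.
  by move=> _; rewrite Hsize // Hna // delta_notin_code.
have pivot := block_pair_codeword C_wt_ge2 Hpart Hw2 HX nb_at_delta.
split; first exact: block_reduce pivot x Hx.
move=> [x' x'C [x'x /eqP/cards1P[i0 supp_x']]] i iX.
have [y yC [yx' supp_y]] := block_move pivot x'C supp_x' iX.
by exists y => //; split=> // l lX; rewrite yx' ?x'x.
Qed.
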